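(* Let $G(a,b,\lambda)$ and $H(a,b,\lambda)$ be polynomials in $a,b$ whose coefficients are Laurent polynomials in $\lambda$, and let $g=G(\varphi,\varphi',\lambda)$, $h=H(\varphi,\varphi',\lambda)$ (with $\varphi=\varphi(\lambda)$, $\varphi'=d\varphi/d\lambda$) be formal series in $\lambda$ of lowest order $\ge1$, i.e. containing only positive powers of $\lambda$. Then $$[\partial_g,\partial_h]=\partial_{\{g,h\}},\qquad \{g,h\}=h_\varphi\,g-g_\varphi\,h+h_{\varphi'}\,D_\lambda g-g_{\varphi'}\,D_\lambda h,$$ where $g_\varphi=(\partial G/\partial a)(\varphi,\varphi',\lambda)$, $g_{\varphi'}=(\partial G/\partial b)(\varphi,\varphi',\lambda)$ (similarly for $h$), and $D_\lambda$ denotes the derivative $d/d\lambda$ of a formal series in $\lambda$.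
   Context: $\varphi^{(1)},\varphi^{(2)},\dots$ are independent variables and $\varphi(\lambda)=1/\lambda+\sum_{k\ge1}\varphi^{(k)}\lambda^k$, a formal Laurent series with coefficients in $R=\mathbb R[\varphi^{(1)},\varphi^{(2)},\dots]$. For a series $f=\sum_{i\ge1}f^{(i)}\lambda^i$ with $f^{(i)}\in R$, $\partial_f$ denotes the derivation $\sum_{i\ge1}f^{(i)}\partial/\partial\varphi^{(i)}$ of $R$, acting on series coefficientwise. *)

From HB Require Import structures.
From mathcomp Require Import all_boot all_order all_algebra.
From mathcomp Require Import finmap.
From mathcomp Require Import monalg.
From mathcomp Require Import reals.

Set Implicit Arguments.
Unset Strict Implicit.
Unset Printing Implicit Defensive.

Import Order.TTheory GRing.Theory Num.Theory.
Local Open Scope ring_scope.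

Section Defs.
Variable F : realType.

(* The coefficient ring R = F[phi^(1), phi^(2), ...]: commutative polynomials
   with variables indexed by nat.  The variable with index k is phi^(k+1). *)
Definition Rphi := {malg F[cmonom nat]}.

Definition phivar (k : nat) : Rphi := << ucm k >>.

Definition pdv (k : nat) (r : Rphi) : Rphi :=
  \sum_(m <- msupp r) << (r@_m * (m k)%:R) *g divcm m (ucm k) >>.

Definition vars (r : Rphi) : {fset nat} :=
  (\bigcup_(m <- msupp r) finsupp (cmonom_val m))%fset.

(* Formal Laurent series in lambda with coefficients in R:
   LSer N a  stands for  \sum_(n >= 0) a n * lambda^(n - N). *)
Record lser := LSer { lsh : nat ; lco : nat -> Rphi }.

Definition lcoef (s : lser) (m : int) : Rphi :=
  match (m + (lsh s)%:Z)%R with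
  | Posz n => lco s n
  | Negz _ => 0
  end.

Definition lraise (k : nat) (s : lser) : lser :=
  LSer (lsh s + k) (fun n => if (k <= n)%N then lco s (n - k) else 0).

Definition ladd (s t : lser) : lser :=
  let N := maxn (lsh s) (lsh t) in
  LSer N (fun n => lco (lraise (N - lsh s) s) n + lco (lraise (N - lsh t) t) n).

Definition lopp (s : lser) : lser := LSer (lsh s) (fun n => - lco s n).

Definition lsub (s t : lser) : lser := ladd s (lopp t).

Definition lmul (s t : lser) : lser :=
  LSer (lsh s + lsh t) (fun n => \sum_(i < n.+1) lco s i * lco t (n - i)).

Definition lzero : lser := LSer 0 (fun _ => 0).

Definition lampowN (N : nat) : lser := LSer N (fun n => if n == 0%N then 1 else 0).

Definition lD (s : lser) : lser :=
  LSer (lsh s).+1 (fun n => ((n%:Z - (lsh s)%:Z)%R)%:~R * lco s n).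

Definition lpoly (q : {poly F}) : lser := LSer 0 (fun n => (q`_n)%:A).

Definition lhorner (c : seq lser) (x : lser) : lser :=
  foldr (fun a acc => ladd a (lmul acc x)) lzero c.

(* phi(lambda) = 1/lambda + \sum_(k >= 1) phi^(k) lambda^k *)
Definition phi : lser :=
  LSer 1 (fun n => match n with 0 => 1 | 1 => 0 | k.+2 => phivar k end).

(* A polynomial G(a,b,lambda) in a, b whose coefficients are Laurent polynomials
   in lambda, written as lambda^(-gsh) * gpol(a,b,lambda), where
   gpol = \sum_i (\sum_j (\sum_k c_ijk lambda^k) b^j) a^i. *)
Record gpoly := GPoly { gsh : nat ; gpol : {poly {poly {poly F}}} }.

Definition gda (G : gpoly) : gpoly := GPoly (gsh G) (gpol G)^`().
Definition gdb (G : gpoly) : gpoly := GPoly (gsh G) (map_poly (@deriv _) (gpol G)).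

Definition gev (G : gpoly) : lser :=
  lmul (lampowN (gsh G))
    (lhorner (map (fun Q : {poly {poly F}} => lhorner (map lpoly (polyseq Q)) (lD phi))
                  (polyseq (gpol G))) phi).

Definition posord (s : lser) : Prop := forall m : int, m <= 0 -> lcoef s m = 0.

(* the derivation  d_f = \sum_(i >= 1) f^(i) d/d phi^(i)  of R
   (only the finitely many variables occurring in r contribute) *)
Definition pder (f : lser) (r : Rphi) : Rphi :=
  \sum_(k <- vars r) lcoef f (k.+1)%:Z * pdv k r.

Definition gbracket (G H : gpoly) : lser :=
  let g := gev G in let h := gev H in
  ladd (lsub (lmul (gev (gda H)) g) (lmul (gev (gda G)) h))
       (lsub (lmul (gev (gdb H)) (lD g)) (lmul (gev (gdb G)) (lD h))).

End Defs.

(* Both sides of the commutator identity are derivations of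
   R = F[phi^(1), phi^(2), ...] vanishing on the scalars, hence equal as soon
   as they agree on each variable phi^(k), i.e. as soon as the coefficients
   of {g,h} are those of d_g h - d_h g.  Extending d_g coefficientwise to a
   derivation of the Laurent series over R, the chain rule gives
     d_g H(phi, phi', lambda) = h_phi d_g phi + h_phi' d_g phi'
                              = h_phi g + h_phi' D g,
   since d_g phi = g: the coefficients of phi at lambda^-1 and lambda^0 are
   constants, and those of g vanish there.  Subtracting the same identity
   with g and h swapped gives {g,h} = d_g h - d_h g, which also shows that
   {g,h} has only positive powers of lambda. *)

From HB Require Import structures.
From mathcomp Require Import all_boot all_order all_algebra.
From mathcomp Require Import finmap monalg reals.
From mathcomp Require Import boolp zify ring.

Set Implicit Arguments.
Unset Strict Implicit.
Unset Printing Implicit Defensive.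

Import GRing.Theory.
Local Open Scope fset_scope.
Local Open Scope ring_scope.

Definition leibniz (T : pzRingType) (d : T -> T) :=
  forall x y, d (x * y) = d x * y + x * d y.

Lemma leibniz_lincomb (T : comPzRingType) (I : Type) (W : seq I) (c : I -> T)
    (d : I -> T -> T) :
  (forall i, leibniz (d i)) -> leibniz (fun x => \sum_(i <- W) c i * d i x).
Proof.
move=> dM x y; rewrite mulr_suml mulr_sumr -big_split.
by apply: eq_bigr => i _; rewrite dM mulrDr mulrA mulrCA.
Qed.

Lemma leibnizB (T : pzRingType) (d1 d2 : T -> T) :
  leibniz d1 -> leibniz d2 -> leibniz (d1 \- d2).
Proof. by move=> d1M d2M x y; rewrite /= d1M d2M mulrBl mulrBr opprD addrACA. Qed.

Lemma leibniz_commutator (T : comNzRingType) (d1 d2 : {additive T -> T}) :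
  leibniz d1 -> leibniz d2 -> leibniz ((d1 \o d2) \- (d2 \o d1)).
Proof.
move=> d1M d2M x y /=.
by rewrite d1M d2M (raddfD d1) (raddfD d2) !d1M !d2M; ring.
Qed.

Section LaurentRing.
Variable R : comNzRingType.

Definition vanishes_below (f : int -> R) (N : nat) :=
  forall m : int, m < - N%:Z -> f m = 0.

Record laurent := Laurent {
  coefL : int -> R;
  coefL_bounded : exists N : nat, vanishes_below coefL N }.

Lemma laurentP (x y : laurent) : coefL x =1 coefL y -> x = y.
Proof.
case: x y => f fP [g gP] /= /funext fg; subst g.
by congr Laurent; apply: Prop_irrelevance.
Qed.

HB.instance Definition _ := gen_eqMixin laurent.
HB.instance Definition _ := gen_choiceMixin laurent.

Definition lbound (x : laurent) : nat := proj1_sig (cid (coefL_bounded x)).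

Lemma lboundP (x : laurent) : vanishes_below (coefL x) (lbound x).
Proof. exact: (proj2_sig (cid (coefL_bounded x))). Qed.

Lemma vanishes_belowW f N N' :
  (N <= N')%N -> vanishes_below f N -> vanishes_below f N'.
Proof. by move=> le_NN' f0 m lt_m; apply: f0; lia. Qed.

(* Coefficient [m] of the product of two Laurent series with coefficients
   [f] and [g], provided [f] vanishes below [-N] and [g] below [-M]. *)
Definition lconv (f g : int -> R) (N M : nat) (m : int) : R :=
  match m + N%:Z + M%:Z with
  | Posz n => \sum_(i < n.+1) f (i%:Z - N%:Z) * g (m - (i%:Z - N%:Z))
  | Negz _ => 0
  end.

Lemma lconvC f g N M m : lconv f g N M m = lconv g f M N m.
Proof.
rewrite /lconv [m + M%:Z + N%:Z]addrAC.
case E: (m + N%:Z + M%:Z) => [n|] //.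
rewrite -(big_mkord xpredT (fun i => f (i%:Z - N%:Z) * g (m - (i%:Z - N%:Z)))).
rewrite -(big_mkord xpredT (fun i => g (i%:Z - M%:Z) * f (m - (i%:Z - M%:Z)))).
rewrite big_nat_rev /=; apply: eq_big_nat => i /andP[_ lt_i].
by rewrite mulrC; congr (g _ * f _); lia.
Qed.

Lemma lconvSl f g N M m :
  vanishes_below f N -> lconv f g N.+1 M m = lconv f g N M m.
Proof.
move=> f0; rewrite /lconv.
case E: (m + N%:Z + M%:Z) => [n|n]; case E': (m + N.+1%:Z + M%:Z) => [n'|n'] //;
  try lia.
- have -> : n' = n.+1 by lia.
  rewrite big_ord_recl /= f0 ?mul0r ?add0r; last by lia.
  by apply: eq_bigr => i _; congr (f _ * g _); rewrite /bump /=; lia.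
- have -> : n' = 0%N by lia.
  by rewrite big_ord_recl big_ord0 /= f0 ?mul0r ?addr0 //; lia.
Qed.

Lemma lconvSr f g N M m :
  vanishes_below g M -> lconv f g N M.+1 m = lconv f g N M m.
Proof. by move=> g0; rewrite lconvC lconvSl // lconvC. Qed.

Lemma lconv_widen f g N M a b m : vanishes_below f N -> vanishes_below g M ->
  lconv f g (N + a) (M + b) m = lconv f g N M m.
Proof.
move=> f0 g0; transitivity (lconv f g N (M + b) m).
  elim: a => [|a IH]; first by rewrite addn0.
  by rewrite addnS lconvSl //; apply: vanishes_belowW (leq_addr a N) f0.
elim: b => [|b IH]; first by rewrite addn0.
by rewrite addnS lconvSr //; apply: vanishes_belowW (leq_addr b M) g0.
Qed.

Lemma lconv_bound_indep f g N M N' M' m :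
  vanishes_below f N -> vanishes_below g M ->
  vanishes_below f N' -> vanishes_below g M' ->
  lconv f g N M m = lconv f g N' M' m.
Proof.
move=> f0 g0 f0' g0'.
rewrite -(lconv_widen (maxn N N' - N) (maxn M M' - M) m f0 g0).
rewrite -(lconv_widen (maxn N N' - N') (maxn M M' - M') m f0' g0').
by rewrite !subnKC ?leq_maxl ?leq_maxr.
Qed.

Lemma lconv_vanishes f g N M : vanishes_below (lconv f g N M) (N + M).
Proof. by move=> m lt_m; rewrite /lconv; case E: (m + _ + _) => //; lia. Qed.



Lemma cauchy_sumA (a b c : nat -> R) n :
  \sum_(i < n.+1) (\sum_(j < i.+1) a j * b (i - j)%N) * c (n - i)%N =
  \sum_(j < n.+1) a j * \sum_(k < (n - j).+1) b k * c (n - j - k)%N.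
Proof.
pose P (u : nat -> R) := \poly_(i < n.+1) u i.
have coefP u i : (i <= n)%N -> (P u)`_i = u i.
  by move=> le_in; rewrite coef_poly ltnS le_in.
have -> : \sum_(i < n.+1) (\sum_(j < i.+1) a j * b (i - j)%N) * c (n - i)%N =
          ((P a * P b) * P c)`_n.
  rewrite coefM; apply: eq_bigr => i _; rewrite coefM coefP ?leq_subr //.
  congr (_ * _); apply: eq_bigr => j _.
  by rewrite !coefP //; have := ltn_ord i; have := ltn_ord j; lia.
rewrite -mulrA coefM; apply: eq_bigr => j _; have := ltn_ord j => lt_j.
rewrite coefM coefP; last by lia.
by congr (_ * _); apply: eq_bigr => k _; rewrite !coefP //; have := ltn_ord k; lia.
Qed.

Lemma lconvA f g h N M K m :
  lconv f (lconv g h M K) N (M + K) m = lconv (lconv f g N M) h (N + M) K m.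
Proof.
rewrite /lconv; have -> : m + N%:Z + (M + K)%N%:Z = m + (N + M)%N%:Z + K%:Z by lia.
case E: (m + (N + M)%N%:Z + K%:Z) => [n|] //.
pose a j := f (j%:Z - N%:Z); pose b k := g (k%:Z - M%:Z); pose c l := h (l%:Z - K%:Z).
transitivity (\sum_(j < n.+1) a j * \sum_(k < (n - j).+1) b k * c (n - j - k)%N).
  apply: eq_bigr => j _; have := ltn_ord j => lt_j.
  have -> : m - (j%:Z - N%:Z) + M%:Z + K%:Z = (n - j)%N by lia.
  by congr (_ * _); apply: eq_bigr => k _; congr (_ * h _); have := ltn_ord k; lia.
rewrite -cauchy_sumA; apply: eq_bigr => i _; have := ltn_ord i => lt_i.
have -> : i%:Z - (N + M)%N%:Z + N%:Z + M%:Z = i by lia.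
congr (_ * h _); last by lia.
by apply: eq_bigr => j _; congr (_ * g _); have := ltn_ord j; lia.
Qed.

Local Notation L := laurent.

Lemma L0_bounded : exists N, vanishes_below (fun _ => 0) N.
Proof. by exists 0%N. Qed.
Definition L0 : L := Laurent L0_bounded.

Lemma Ladd_bounded (x y : L) :
  exists N, vanishes_below (fun m => coefL x m + coefL y m) N.
Proof.
by exists (maxn (lbound x) (lbound y)) => m lt_m; rewrite !lboundP ?addr0 //; lia.
Qed.
Definition Ladd (x y : L) : L := Laurent (Ladd_bounded x y).

Lemma Lopp_bounded (x : L) : exists N, vanishes_below (fun m => - coefL x m) N.
Proof. by exists (lbound x) => m lt_m; rewrite lboundP ?oppr0. Qed.
Definition Lopp (x : L) : L := Laurent (Lopp_bounded x).

Lemma LaddA : associative Ladd.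
Proof. by move=> x y z; apply: laurentP => m /=; rewrite addrA. Qed.
Lemma LaddC : commutative Ladd.
Proof. by move=> x y; apply: laurentP => m /=; rewrite addrC. Qed.
Lemma Ladd0 : left_id L0 Ladd.
Proof. by move=> x; apply: laurentP => m /=; rewrite add0r. Qed.
Lemma LaddN : left_inverse L0 Lopp Ladd.
Proof. by move=> x; apply: laurentP => m /=; rewrite addNr. Qed.

HB.instance Definition _ := GRing.isZmodule.Build L LaddA LaddC Ladd0 LaddN.

Lemma coefLD (x y : L) m : coefL (x + y) m = coefL x m + coefL y m.
Proof. by []. Qed.

Lemma coefLN (x : L) m : coefL (- x) m = - coefL x m.
Proof. by []. Qed.

Lemma Lmul_bounded (x y : L) :
  exists N, vanishes_below (lconv (coefL x) (coefL y) (lbound x) (lbound y)) N.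
Proof. by exists (lbound x + lbound y)%N; apply: lconv_vanishes. Qed.
Definition Lmul (x y : L) : L := Laurent (Lmul_bounded x y).

Lemma coefLmul (x y : L) N M :
  vanishes_below (coefL x) N -> vanishes_below (coefL y) M ->
  coefL (Lmul x y) =1 lconv (coefL x) (coefL y) N M.
Proof. by move=> x0 y0 m; apply: lconv_bound_indep => //; apply: lboundP. Qed.

Lemma L1_bounded : exists N, vanishes_below (fun m => (m == 0)%:R) N.
Proof. by exists 0%N => m lt_m; case: eqP => //; lia. Qed.
Definition L1 : L := Laurent L1_bounded.

Lemma LmulC : commutative Lmul.
Proof. by move=> x y; apply: laurentP => m /=; rewrite lconvC. Qed.

Lemma LmulA : associative Lmul.
Proof.
move=> x y z; apply: laurentP => m.
have x0 := @lboundP x; have y0 := @lboundP y; have z0 := @lboundP z.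
rewrite (coefLmul x0 (_ : vanishes_below _ (lbound y + lbound z))); last first.
  by move=> k lt_k; rewrite (coefLmul y0 z0) lconv_vanishes.
rewrite (coefLmul (_ : vanishes_below _ (lbound x + lbound y)) z0); last first.
  by move=> k lt_k; rewrite (coefLmul x0 y0) lconv_vanishes.
exact: lconvA.
Qed.

Lemma Lmul1 : left_id L1 Lmul.
Proof.
move=> x; apply: laurentP => m.
have one0 : vanishes_below (coefL L1) 0 by move=> k lt_k /=; case: eqP => //; lia.
rewrite (coefLmul one0 (@lboundP x)) /lconv addr0.
case E: (m + _) => [n|]; last by rewrite lboundP //; lia.
by rewrite big_ord_recl /= subr0 mul1r big1 ?addr0 // => i _; rewrite mul0r.
Qed.

Lemma LmulDl : left_distributive Lmul Ladd.
Proof.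
move=> x y z; apply: laurentP => m.
have x0 := @lboundP x; have y0 := @lboundP y; have z0 := @lboundP z.
have xy0 : vanishes_below (coefL (Ladd x y)) (maxn (lbound x) (lbound y)).
  by move=> k lt_k; rewrite /= !lboundP ?addr0 //; lia.
rewrite (coefLmul xy0 z0) coefLD.
rewrite (coefLmul (vanishes_belowW (leq_maxl _ (lbound y)) x0) z0).
rewrite (coefLmul (vanishes_belowW (leq_maxr (lbound x) _) y0) z0) /lconv.
case: (_ + _ + _) => [n|]; last by rewrite addr0.
by rewrite -big_split; apply: eq_bigr => i _; rewrite mulrDl.
Qed.

Lemma L1_neq0 : L1 != 0.
Proof. by apply/eqP => /(congr1 (coefL ^~ 0)) /= /eqP; rewrite oner_eq0. Qed.

HB.instance Definition _ :=
  GRing.Zmodule_isComNzRing.Build L LmulA LmulC Lmul1 LmulDl L1_neq0.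

Lemma coefLM (x y : L) N M :
  vanishes_below (coefL x) N -> vanishes_below (coefL y) M ->
  coefL (x * y) =1 lconv (coefL x) (coefL y) N M.
Proof. exact: coefLmul. Qed.

End LaurentRing.

Lemma map_polyMXaddC (A B : nzRingType) (f : {additive A -> B}) (p : {poly A}) c :
  map_poly f (p * 'X + c%:P) = map_poly f p * 'X + (f c)%:P.
Proof.
apply/polyP => i; rewrite coef_map !coefD !coefMX !coefC coef_map raddfD.
by case: i => [|i] //=; rewrite ?raddf0 // coefMX /= ?add0r ?addr0.
Qed.

Lemma deriv_map_additive (A B : nzRingType) (f : {additive A -> B}) (p : {poly A}) :
  (map_poly f p)^`() = map_poly f p^`().
Proof. by apply/polyP => i; rewrite !(coef_map, coef_deriv) raddfMn. Qed.

Section LaurentDerivation.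
Variable R : comNzRingType.
Local Notation L := (laurent R).
Variable d : {additive R -> R}.
Hypothesis dM : leibniz d.

Lemma Lder_bounded (x : L) : exists N, vanishes_below (fun m => d (coefL x m)) N.
Proof. by exists (lbound x) => m lt_m; rewrite lboundP ?raddf0. Qed.
Definition Lder_fun (x : L) : L := Laurent (Lder_bounded x).

Lemma Lder_is_additive : zmod_morphism Lder_fun.
Proof. by move=> x y; apply: laurentP => m /=; rewrite raddfB. Qed.

HB.instance Definition _ :=
  GRing.isZmodMorphism.Build L L Lder_fun Lder_is_additive.

Definition Lder : {additive L -> L} := Lder_fun.

Lemma coefLder x m : coefL (Lder x) m = d (coefL x m).
Proof. by []. Qed.

Lemma LderM : leibniz Lder.
Proof.
move=> x y; apply: laurentP => m; rewrite coefLD coefLder.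
have x0 := @lboundP _ x; have y0 := @lboundP _ y.
have dx0 : vanishes_below (coefL (Lder x)) (lbound x).
  by move=> k /x0; rewrite coefLder => ->; rewrite raddf0.
have dy0 : vanishes_below (coefL (Lder y)) (lbound y).
  by move=> k /y0; rewrite coefLder => ->; rewrite raddf0.
rewrite (coefLM x0 y0) (coefLM dx0 y0) (coefLM x0 dy0) /lconv.
case: (_ + _ + _) => [n|]; last by rewrite raddf0 addr0.
by rewrite raddf_sum -big_split; apply: eq_bigr => i _; rewrite dM.
Qed.

Lemma Lder_horner (p : {poly L}) x :
  Lder p.[x] = (map_poly Lder p).[x] + p^`().[x] * Lder x.
Proof.
elim/poly_ind: p => [|p a IH].
  by rewrite horner0 raddf0 map_poly0 deriv0 !horner0 mul0r addr0.
rewrite hornerMXaddC raddfD LderM IH map_polyMXaddC derivMXaddC.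
by rewrite !hornerMXaddC hornerD hornerMX; ring.
Qed.

Section ConstantCoefficients.
Variables (K : nzRingType) (c : {additive K -> L}) (y : L).
Hypothesis Lder_c : forall a, Lder (c a) = 0.

Definition eval1 (q : {poly K}) : L := (map_poly c q).[y].

Lemma eval1_is_additive : zmod_morphism eval1.
Proof. by move=> p q; rewrite /eval1 raddfB hornerD hornerN. Qed.

HB.instance Definition _ :=
  GRing.isZmodMorphism.Build {poly K} L eval1 eval1_is_additive.

Definition eval2 (P : {poly {poly K}}) (x : L) : L := (map_poly eval1 P).[x].

Lemma Lder_eval1 q : Lder (eval1 q) = eval1 q^`() * Lder y.
Proof.
rewrite /eval1 Lder_horner deriv_map_additive.
have -> : map_poly Lder (map_poly c q) = 0.
  by apply/polyP => i; rewrite !coef_map Lder_c coef0.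
by rewrite horner0 add0r.
Qed.

Lemma Lder_eval2 P x :
  Lder (eval2 P x) =
  eval2 P^`() x * Lder x + eval2 (map_poly (@deriv K) P) x * Lder y.
Proof.
rewrite /eval2 Lder_horner addrC deriv_map_additive; congr (_ + _).
have -> : map_poly Lder (map_poly eval1 P) =
          map_poly eval1 (map_poly (@deriv K) P) * (Lder y)%:P.
  by apply/polyP => i; rewrite coefMC !coef_map /= Lder_eval1.
by rewrite hornerM hornerC.
Qed.

Lemma Lder_mul_eval2 a P x : Lder a = 0 ->
  Lder (a * eval2 P x) =
  a * eval2 P^`() x * Lder x + a * eval2 (map_poly (@deriv K) P) x * Lder y.
Proof. by move=> Da; rewrite LderM Da mul0r add0r Lder_eval2 mulrDr !mulrA. Qed.

End ConstantCoefficients.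
End LaurentDerivation.

Section SeriesEmbedding.
Variable F : realType.
Local Notation R := (Rphi F).
Local Notation L := (laurent R).
Implicit Types s t : lser F.

Lemma lcoefE s m n : m + (lsh s)%:Z = n%:Z -> lcoef s m = lco s n.
Proof. by rewrite /lcoef => ->. Qed.

Lemma lcoef_eq0 s m : m + (lsh s)%:Z < 0 -> lcoef s m = 0.
Proof. by rewrite /lcoef; case: (m + _) => //; lia. Qed.

Lemma lcoef_vanishes s : vanishes_below (lcoef s) (lsh s).
Proof. by move=> m lt_m; apply: lcoef_eq0; lia. Qed.

Definition toL s : L := Laurent (ex_intro _ (lsh s) (@lcoef_vanishes s)).

Lemma coefL_toL s : coefL (toL s) = lcoef s.
Proof. by []. Qed.

Lemma toL_vanishes s : vanishes_below (coefL (toL s)) (lsh s).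
Proof. by rewrite coefL_toL; exact: lcoef_vanishes. Qed.

Lemma lcoef_lraise k s m : lcoef (lraise k s) m = lcoef s m.
Proof.
rewrite {1}/lcoef /= PoszD addrA.
case E: (m + (lsh s)%:Z + k%:Z) => [n|]; last by rewrite lcoef_eq0 //; lia.
case: ifP => le_kn; first by rewrite (@lcoefE s m (n - k)) //; lia.
by rewrite lcoef_eq0 //; lia.
Qed.

Lemma lcoef_ladd s t m : lcoef (ladd s t) m = lcoef s m + lcoef t m.
Proof.
rewrite -(lcoef_lraise (maxn (lsh s) (lsh t) - lsh s) s).
rewrite -(lcoef_lraise (maxn (lsh s) (lsh t) - lsh t) t).
rewrite /lcoef /= !subnKC ?leq_maxl ?leq_maxr //.
by case: (m + _); rewrite ?addr0.
Qed.

Lemma toL_add s t : toL (ladd s t) = toL s + toL t.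
Proof. by apply: laurentP => m; rewrite coefLD !coefL_toL lcoef_ladd. Qed.

Lemma toL_opp s : toL (lopp s) = - toL s.
Proof.
apply: laurentP => m; rewrite coefLN !coefL_toL /lcoef.
by case: (m + _); rewrite ?oppr0.
Qed.

Lemma toL_sub s t : toL (lsub s t) = toL s - toL t.
Proof. by rewrite toL_add toL_opp. Qed.

Lemma toL_zero : toL (lzero F) = 0.
Proof. by apply: laurentP => m; rewrite coefL_toL /lcoef; case: (m + _). Qed.

Lemma toL_mul s t : toL (lmul s t) = toL s * toL t.
Proof.
apply: laurentP => m.
rewrite (coefLM (@toL_vanishes s) (@toL_vanishes t)) !coefL_toL /lconv.
case E: (m + (lsh s)%:Z + (lsh t)%:Z) => [n|]; last first.
  by rewrite /= lcoef_eq0 //= PoszD; lia.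
rewrite /= (@lcoefE _ m n) /=; last by rewrite PoszD addrA.
apply: eq_bigr => i _; have := ltn_ord i => lt_i.
by rewrite (@lcoefE s _ i) ?(@lcoefE t _ (n - i)) //; lia.
Qed.

(* Rewriting with [toL_mul] in this goal would make Rocq unify distinct
   [lmul] products, which unfolds the arithmetic of [Rphi]; the detour
   through [toL_subM] avoids every such comparison. *)
Lemma toL_bracket_form (a b c d e f p q : lser F) :
  toL (ladd (lsub (lmul a b) (lmul c d)) (lsub (lmul e f) (lmul p q))) =
  toL a * toL b + toL e * toL f - (toL c * toL d + toL p * toL q).
Proof.
have toL_subM u v w z : toL (lsub (lmul u v) (lmul w z)) = toL u * toL v - toL w * toL z.
  exact: etrans (toL_sub _ _) (congr2 (fun x y => x - y) (toL_mul u v) (toL_mul w z)).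
by rewrite opprD addrACA -!toL_subM -toL_add.
Qed.

Lemma toL_lhorner (c : seq (lser F)) x :
  toL (lhorner c x) = (Poly (map toL c)).[toL x].
Proof.
elim: c => [|a c IH] /=; first by rewrite horner0 toL_zero.
by rewrite horner_cons -IH toL_add toL_mul addrC.
Qed.

Lemma lcoef_lD s m : lcoef (lD s) m = (m + 1)%:~R * lcoef s (m + 1).
Proof.
case E: (m + 1 + (lsh s)%:Z) => [n|]; last by rewrite !lcoef_eq0 ?mulr0 //=; lia.
rewrite (@lcoefE _ m n) /=; last by lia.
by rewrite (lcoefE E); congr (_%:~R * _); lia.
Qed.

Lemma constL_bounded (q : {poly F}) :
  exists N, vanishes_below (fun m => if m is Posz n then (q`_n)%:A else 0 : R) N.
Proof. by exists 0%N => -[n|//]; lia. Qed.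

Definition constL (q : {poly F}) : L := Laurent (constL_bounded q).

Lemma constL_is_additive : zmod_morphism constL.
Proof.
move=> p q; apply: laurentP => -[n|_] /=; last by rewrite subr0.
by rewrite coefB scalerBl.
Qed.

HB.instance Definition _ :=
  GRing.isZmodMorphism.Build {poly F} L constL constL_is_additive.

Lemma toL_lpoly (q : {poly F}) : toL (lpoly q) = constL q.
Proof. by apply: laurentP => m; rewrite coefL_toL /lcoef addr0; case: m. Qed.

Lemma toL_gev (G : gpoly F) :
  toL (gev G) = toL (lampowN F (gsh G)) *
    eval2 constL (toL (lD (phi F))) (gpol G) (toL (phi F)).
Proof.
rewrite /gev toL_mul toL_lhorner /eval2 map_polyE -map_comp.
congr (_ * (Poly _).[_]); apply: eq_map => Q.
rewrite /= toL_lhorner /eval1 map_polyE -map_comp.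
by congr (Poly _).[_]; apply: eq_map => q; exact: toL_lpoly.
Qed.

End SeriesEmbedding.

Section PartialDerivatives.
Variable F : realType.
Local Notation R := (Rphi F).
Implicit Types (r s : R) (c : F) (m : cmonom nat).

Lemma divcmUMl k m1 m2 :
  m1 k != 0%N -> divcm (mmul m1 m2) (ucm k) = mmul (divcm m1 (ucm k)) m2.
Proof.
move=> m1k; apply/eqP/cmP => i; rewrite !(divcmE, cmM, ucmE).
by case: eqP => [<-|_]; lia.
Qed.

Lemma divcmUMr k m1 m2 :
  m2 k != 0%N -> divcm (mmul m1 m2) (ucm k) = mmul m1 (divcm m2 (ucm k)).
Proof.
move=> m2k; apply/eqP/cmP => i; rewrite !(divcmE, cmM, ucmE).
by case: eqP => [<-|_]; lia.
Qed.

Lemma pdvE_fsubset k r (S : {fset cmonom nat}) : msupp r `<=` S ->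
  pdv k r = \sum_(m <- S) << r@_m * (m k)%:R *g divcm m (ucm k) >>.
Proof.
move=> le_rS; rewrite /pdv (big_fset_incl _ le_rS) // => m _ /mcoeff_outdom ->.
by rewrite mul0r monalgU0.
Qed.

Lemma pdv_is_additive k : zmod_morphism (@pdv F k).
Proof.
move=> r s; set S := msupp r `|` msupp s `|` msupp (r - s).
have rS : msupp r `<=` S by rewrite /S -fsetUA fsubsetUl.
have sS : msupp s `<=` S by rewrite /S fsetUAC fsubsetUr.
have rsS : msupp (r - s) `<=` S by rewrite /S fsubsetUr.
rewrite (pdvE_fsubset _ rS) (pdvE_fsubset _ sS) (pdvE_fsubset _ rsS) -sumrB.
by apply: eq_bigr => m _; rewrite mcoeffB mulrBl monalgUB.
Qed.

HB.instance Definition _ k :=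
  GRing.isZmodMorphism.Build R R (@pdv F k) (pdv_is_additive k).

Lemma pdvU k c m :
  pdv k << c *g m >> = << c * (m k)%:R *g divcm m (ucm k) >> :> R.
Proof. by rewrite (pdvE_fsubset _ msuppU_le) big_seq_fset1 mcoeffUU. Qed.

Lemma monalgUM c1 c2 m1 m2 :
  << c1 *g m1 >> * << c2 *g m2 >> = << c1 * c2 *g mmul m1 m2 >> :> R.
Proof. exact: fgmulUU. Qed.

Lemma pdvUM k c1 c2 m1 m2 :
  pdv k (<< c1 *g m1 >> * << c2 *g m2 >> : R) =
  pdv k << c1 *g m1 >> * << c2 *g m2 >> + << c1 *g m1 >> * pdv k << c2 *g m2 >>.
Proof.
rewrite monalgUM [LHS]pdvU [X in _ = X * _ + _]pdvU [X in _ = _ + _ * X]pdvU.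
rewrite [X in _ = X + _]monalgUM [X in _ = _ + X]monalgUM.
rewrite cmM natrD mulrDr monalgUD; apply: (congr2 +%R).
  have [->|m1k] := eqVneq (m1 k) 0%N; first by rewrite !mulr0 mul0r !monalgU0.
  by apply: (congr2 mkmalgU); [exact: divcmUMl | rewrite mulrAC].
have [->|m2k] := eqVneq (m2 k) 0%N; first by rewrite !mulr0 !monalgU0.
by apply: (congr2 mkmalgU); [exact: divcmUMr | rewrite mulrA].
Qed.

Lemma pdvM k : leibniz (@pdv F k).
Proof.
move=> r s.
have -> : pdv k (r * s) = \sum_(m1 <- msupp r) \sum_(m2 <- msupp s)
    pdv k (<< r@_m1 *g m1 >> * << s@_m2 *g m2 >>).
  rewrite {1}(monalgE r) mulr_suml raddf_sum; apply: eq_bigr => m1 _.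
  by rewrite {1}(monalgE s) mulr_sumr raddf_sum.
have -> : pdv k r * s = \sum_(m1 <- msupp r) \sum_(m2 <- msupp s)
    pdv k << r@_m1 *g m1 >> * << s@_m2 *g m2 >>.
  rewrite {1}(monalgE r) raddf_sum mulr_suml; apply: eq_bigr => m1 _.
  by rewrite {1}(monalgE s) mulr_sumr.
have -> : r * pdv k s = \sum_(m1 <- msupp r) \sum_(m2 <- msupp s)
    << r@_m1 *g m1 >> * pdv k << s@_m2 *g m2 >>.
  rewrite {1}(monalgE r) mulr_suml; apply: eq_bigr => m1 _.
  by rewrite {1}(monalgE s) raddf_sum mulr_sumr.
rewrite -big_split; apply: eq_bigr => m1 _.
by rewrite -big_split; apply: eq_bigr => m2 _; exact: pdvUM.
Qed.

Lemma pdv_eq0 k r : k \notin vars r -> pdv k r = 0.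
Proof.
move=> kNr; rewrite /pdv big_seq big1 // => m mr.
have -> : m k = 0%N.
  apply/eqP; rewrite cmE_eq0; apply: contra kNr => km.
  by apply/bigfcupP; exists m; rewrite ?mr.
by rewrite mulr0 monalgU0.
Qed.

Lemma pdv_phivar k n : pdv k (phivar F n) = (n == k)%:R.
Proof.
rewrite /phivar pdvU ucmE mul1r.
have [->|_] := eqVneq n k; last by rewrite monalgU0.
have -> : divcm (ucm k) (ucm k) = mone by apply/eqP/cmP => i; rewrite divcmE cm1 subnn.
by rewrite mpolyC1E.
Qed.

Lemma scalar_monalgU c : c%:A = << c *g mone >> :> R.
Proof. by rewrite -mul_malgC mulr1. Qed.

Lemma pdv_scalar k c : pdv k (c%:A : R) = 0.
Proof. by rewrite scalar_monalgU pdvU cm1 mulr0 monalgU0. Qed.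

Lemma pderE_fsubset (f : lser F) r (W : {fset nat}) : vars r `<=` W ->
  pder f r = \sum_(k <- W) lcoef f k.+1 * pdv k r.
Proof.
move=> le_rW; rewrite /pder (big_fset_incl _ le_rW) // => k _ kNr.
by rewrite pdv_eq0 ?mulr0.
Qed.

Lemma pder_is_additive (f : lser F) : zmod_morphism (pder f).
Proof.
move=> r s; set W := vars r `|` vars s `|` vars (r - s).
have rW : vars r `<=` W by rewrite /W -fsetUA fsubsetUl.
have sW : vars s `<=` W by rewrite /W fsetUAC fsubsetUr.
have rsW : vars (r - s) `<=` W by rewrite /W fsubsetUr.
rewrite (pderE_fsubset _ rW) (pderE_fsubset _ sW) (pderE_fsubset _ rsW) -sumrB.
by apply: eq_bigr => k _; rewrite raddfB mulrBr.
Qed.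

HB.instance Definition _ f :=
  GRing.isZmodMorphism.Build R R (pder f) (pder_is_additive f).

Lemma pderM (f : lser F) : leibniz (pder f).
Proof.
move=> r s; set W := vars r `|` vars s `|` vars (r * s).
have rW : vars r `<=` W by rewrite /W -fsetUA fsubsetUl.
have sW : vars s `<=` W by rewrite /W fsetUAC fsubsetUr.
have rsW : vars (r * s) `<=` W by rewrite /W fsubsetUr.
rewrite (pderE_fsubset _ rW) (pderE_fsubset _ sW) (pderE_fsubset _ rsW).
exact: (leibniz_lincomb W (fun k => lcoef f k.+1) (fun k => pdvM k)).
Qed.

Lemma pder_phivar (f : lser F) n : pder f (phivar F n) = lcoef f n.+1.
Proof.
have le_nn : vars (phivar F n) `<=` [fset n].
  by apply/bigfcupsP => m; rewrite msuppU1 inE => /eqP -> _; rewrite mdomU.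
by rewrite (pderE_fsubset _ le_nn) big_seq_fset1 pdv_phivar eqxx mulr1.
Qed.

Lemma pder_scalar (f : lser F) c : pder f (c%:A : R) = 0.
Proof. by rewrite /pder big1 // => k _; rewrite pdv_scalar mulr0. Qed.

Lemma pder1 (f : lser F) : pder f 1 = 0.
Proof. by have := pder_scalar f 1; rewrite scale1r. Qed.

Lemma derivation_eq0 (D : {additive R -> R}) :
  leibniz D -> (forall c, D c%:A = 0) -> (forall k, D (phivar F k) = 0) ->
  forall r, D r = 0.
Proof.
move=> DM DC DX.
have DM0 x y : D x = 0 -> D y = 0 -> D (x * y) = 0.
  by move=> Dx Dy; rewrite DM Dx Dy mul0r mulr0 addr0.
have DU c m : D << c *g m >> = 0.
  move: {2}(mdeg m) (erefl (mdeg m)) => n; elim: n m c => [|n IH] m c dm.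
    by rewrite (mdeg_eq0I dm) -scalar_monalgU DC.
  have [m1|[k km]] := fset_0Vmem (finsupp m).
    by move: dm; rewrite mdegE m1 big_nil.
  have mk : m k != 0%N by rewrite cmE_neq0.
  have Em : m = mmul (ucm k) (divcm m (ucm k)).
    apply/eqP/cmP => i; rewrite cmM divcmE ucmE.
    by case: eqP => [<-|_]; lia.
  have dm' : mdeg (divcm m (ucm k)) = n.
    by move: dm; rewrite {1}Em mdegM mdegU add1n => -[].
  move: (divcm m (ucm k)) Em dm' => m' -> dm'.
  by rewrite -[c]mul1r -monalgUM; apply: DM0; [exact: DX | exact: IH].
by move=> r; rewrite (monalgE r) raddf_sum big1 // => m _; exact: DU.
Qed.

Lemma pder_commutator (g h b : lser F) :
  (forall k, lcoef b k.+1 = pder g (lcoef h k.+1) - pder h (lcoef g k.+1)) ->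
  forall r, pder g (pder h r) - pder h (pder g r) = pder b r.
Proof.
move=> bE r; apply/eqP; rewrite -subr_eq0; apply/eqP; move: r.
apply: (@derivation_eq0 (((pder g \o pder h) \- (pder h \o pder g)) \- pder b)).
- exact: leibnizB (leibniz_commutator (pderM g) (pderM h)) (pderM b).
- by move=> c /=; rewrite !pder_scalar !raddf0 !addr0.
- by move=> k /=; rewrite !pder_phivar bE subrr.
Qed.

End PartialDerivatives.

Section Bracket.
Variable F : realType.
Local Notation L := (laurent (Rphi F)).

Lemma Lder_pder_scalars (g : lser F) (x : L) :
  (forall m, exists c : F, coefL x m = c%:A) -> Lder (pder g) x = 0.
Proof.
move=> xA; apply: laurentP => m; rewrite coefLder.
by have [c ->] := xA m; exact: pder_scalar.
Qed.

Lemma Lder_constL (g : lser F) q : Lder (pder g) (constL q) = 0.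
Proof.
apply: Lder_pder_scalars => -[n|n]; first by exists q`_n.
by exists 0; rewrite scale0r.
Qed.

Lemma Lder_lampowN (g : lser F) N : Lder (pder g) (toL (lampowN F N)) = 0.
Proof.
apply: Lder_pder_scalars => m; rewrite coefL_toL /lcoef.
case: (m + _) => [n|n]; last by exists 0; rewrite scale0r.
by exists (n == 0%N)%:R; rewrite /=; case: (n == 0%N); rewrite ?scale1r ?scale0r.
Qed.

Lemma pder_lcoef_phi (g : lser F) m :
  posord g -> pder g (lcoef (phi F) m) = lcoef g m.
Proof.
have lsh_phi : lsh (phi F) = 1%N by [].
move=> g0; case E: (m + 1) => [[|[|k]]|n].
- rewrite (@lcoefE _ _ m 0) ?lsh_phi //.
  by rewrite pder1 g0 //; lia.
- rewrite (@lcoefE _ _ m 1) ?lsh_phi //.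
  by rewrite raddf0 g0 //; lia.
- rewrite (@lcoefE _ _ m k.+2) ?lsh_phi //.
  by rewrite pder_phivar; congr lcoef; lia.
- by rewrite lcoef_eq0 ?lsh_phi ?E // raddf0 g0 //; lia.
Qed.

Lemma Lder_phi (g : lser F) : posord g -> Lder (pder g) (toL (phi F)) = toL g.
Proof.
by move=> g0; apply: laurentP => m; rewrite coefLder; exact: pder_lcoef_phi.
Qed.

Lemma pder_lcoef_lD (g s t : lser F) :
  (forall m, pder g (lcoef s m) = lcoef t m) ->
  forall m, pder g (lcoef (lD s) m) = lcoef (lD t) m.
Proof.
by move=> st m; rewrite [RHS]lcoef_lD -st mulrzl -raddfMz -mulrzl lcoef_lD.
Qed.

Lemma Lder_dphi (g : lser F) :
  posord g -> Lder (pder g) (toL (lD (phi F))) = toL (lD g).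
Proof.
move=> g0; apply: laurentP => m; rewrite coefLder.
exact: (pder_lcoef_lD (fun m => pder_lcoef_phi m g0) m).
Qed.

Lemma Lder_gev (g : lser F) (G : gpoly F) : posord g ->
  Lder (pder g) (toL (gev G)) =
  toL (gev (gda G)) * toL g + toL (gev (gdb G)) * toL (lD g).
Proof.
move=> g0; rewrite [X in Lder _ X = _]toL_gev.
rewrite [X in _ = X * _ + _]toL_gev [X in _ = _ + X * _]toL_gev.
rewrite (Lder_mul_eval2 (pderM g) _ (Lder_constL g)) ?Lder_lampowN //.
rewrite Lder_phi // Lder_dphi //.
Qed.

Lemma toL_gbracket (G H : gpoly F) : posord (gev G) -> posord (gev H) ->
  toL (gbracket G H) =
  Lder (pder (gev G)) (toL (gev H)) - Lder (pder (gev H)) (toL (gev G)).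
Proof.
move=> pG pH; apply: etrans (toL_bracket_form _ _ _ _ _ _ _ _) _.
exact: esym (congr2 (fun x y => x - y) (Lder_gev H pG) (Lder_gev G pH)).
Qed.

Lemma lcoef_Lder_commutator (g h b : lser F) :
  toL b = Lder (pder g) (toL h) - Lder (pder h) (toL g) ->
  forall m, lcoef b m = pder g (lcoef h m) - pder h (lcoef g m).
Proof. by move=> bE m; have := congr1 (fun x => coefL x m) bE. Qed.

Lemma posord_commutator (g h b : lser F) : posord g -> posord h ->
  (forall m, lcoef b m = pder g (lcoef h m) - pder h (lcoef g m)) -> posord b.
Proof. by move=> g0 h0 bE m m_le0; rewrite bE g0 // h0 // !raddf0 addr0. Qed.

End Bracket.

Theorem mainTheorem16 (F : realType) (G H : gpoly F) :
  posord (gev G) -> posord (gev H) ->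
  posord (gbracket G H) /\
  forall r : Rphi F,
    pder (gev G) (pder (gev H) r) - pder (gev H) (pder (gev G) r)
    = pder (gbracket G H) r.
Proof.
move=> pG pH; have bracketE := lcoef_Lder_commutator (toL_gbracket pG pH).
split; first exact: posord_commutator pG pH bracketE.
exact: pder_commutator (fun k => bracketE k.+1).
Qed.
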